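(* Let $p\colon X\to B$ be a Boolean set. Let $X^{\ast}$ be the set of ultrafilters of $(X,\le)$, topologized by the basis of sets $L(a)=\{G\in X^{\ast}: a\in G\}$, $a\in X$, and let $B^{\ast}$ be the set of ultrafilters of $B$ with the Stone topology (basis $M(b)=\{F\in B^{\ast}: b\in F\}$, $b\in B$). Let $\widetilde p\colon X^{\ast}\to B^{\ast}$ be $G\mapsto p(G)$ (which is an ultrafilter of $B$). Then $\widetilde p\colon X^{\ast}\to B^{\ast}$ is an étalé space, i.e. $\widetilde p$ is a surjective local homeomorphism (and $B^{\ast}$ is a Boolean space).
   Context: Convention: a ''Boolean algebra'' means a generalized Boolean algebra (relatively complemented distributive lattice with $0$). Presheaf of sets over a meet semilattice $E$: pairwise disjoint sets $X_e$, restriction maps $x\mapsto x|^e_f$ for $e\ge f$ with $|^e_e=\mathrm{id}$ and $(x|^e_f)|^f_g=x|^e_g$; $p(x)=e$ iff $x\in X_e$; global support: all $X_e\neq\emptyset$. Order: $x\le y$ iff $p(x)\le p(y)$ and $x=y|^{p(y)}_{p(x)}$. Compatibility $x\sim y$: $x\wedge y$ exists and $p(x\wedge y)=p(x)\wedge p(y)$. A Boolean set is a presheaf $p\colon X\to B$ with global support over a Boolean algebra $B$ such that $(X,\le)$ has least element $0$, compatible pairs have joins, and $p(x)=0\Rightarrow x=0$. Filter: non-empty, down directed, upwardly closed subset; ultrafilter: maximal proper filter. An étalé space is a triple $(E,p,Y)$ with $p\colon E\to Y$ a surjective local homeomorphism; a Boolean space is a Hausdorff space with a basis of compact-open sets.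 *)

(* B is a generalized Boolean algebra, i.e. a
   sectionally complemented distributive lattice with bottom
   (mathcomp's cbDistrLatticeType). Sets are predicates T -> Prop. *)
From HB Require Import structures.
From Stdlib Require List.
From mathcomp Require Import all_boot all_order.
Set Implicit Arguments. Unset Strict Implicit. Unset Printing Implicit Defensive.
Import Order.TTheory.
Local Open Scope order_scope.

Definition leB {d} {B : cbDistrLatticeType d} (a b : B) : Prop := (a <= b)%O.

(* X is the disjoint union of the X_e; p x = e iff x \in X_e.
   res x f is the restriction x|^{p x}_f, meaningful for f <= p x. *)
Definition presheaf {d} {B : cbDistrLatticeType d} {X : Type}
    (p : X -> B) (res : X -> B -> X) : Prop :=
  (forall x f, f <= p x -> p (res x f) = f) /\
  (forall x, res x (p x) = x) /\
  (forall x f g, g <= f -> f <= p x -> res (res x f) g = res x g).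

Definition global_support {d} {B : cbDistrLatticeType d} {X : Type}
    (p : X -> B) : Prop := forall e : B, exists x : X, p x = e.

Definition leX {d} {B : cbDistrLatticeType d} {X : Type}
    (p : X -> B) (res : X -> B -> X) (x y : X) : Prop :=
  p x <= p y /\ x = res y (p x).

Definition is_meet {T} (le : T -> T -> Prop) (m x y : T) : Prop :=
  le m x /\ le m y /\ (forall z, le z x -> le z y -> le z m).
Definition is_join {T} (le : T -> T -> Prop) (j x y : T) : Prop :=
  le x j /\ le y j /\ (forall z, le x z -> le y z -> le j z).
Definition is_least {T} (le : T -> T -> Prop) (z : T) : Prop :=
  forall x, le z x.

Definition compatible {d} {B : cbDistrLatticeType d} {X : Type}
    (p : X -> B) (res : X -> B -> X) (x y : X) : Prop :=
  exists m, is_meet (leX p res) m x y /\ p m = p x `&` p y.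

Definition boolean_set {d} {B : cbDistrLatticeType d} {X : Type}
    (p : X -> B) (res : X -> B -> X) : Prop :=
  presheaf p res /\ global_support p /\
  (exists z, is_least (leX p res) z) /\
  (forall x y, compatible p res x y -> exists j, is_join (leX p res) j x y) /\
  (forall x, p x = \bot -> is_least (leX p res) x).

Definition filter {T} (le : T -> T -> Prop) (F : T -> Prop) : Prop :=
  (exists x, F x) /\
  (forall x y, F x -> F y -> exists z, F z /\ le z x /\ le z y) /\
  (forall x y, F x -> le x y -> F y).
Definition proper_filter {T} (le : T -> T -> Prop) (F : T -> Prop) : Prop :=
  filter le F /\ exists x, ~ F x.
Definition ultrafilter {T} (le : T -> T -> Prop) (F : T -> Prop) : Prop :=
  proper_filter le F /\
  forall F', proper_filter le F' -> (forall x, F x -> F' x) ->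
             forall x, F' x -> F x.

Definition basic_ultra {T} (le : T -> T -> Prop) (a : T) (G : T -> Prop) : Prop :=
  ultrafilter le G /\ G a.
Definition ultra_open {T} (le : T -> T -> Prop) (U : (T -> Prop) -> Prop) : Prop :=
  forall G, U G -> ultrafilter le G /\
    exists a, G a /\ forall H, basic_ultra le a H -> U H.

Definition ptilde {d} {B : cbDistrLatticeType d} {X : Type}
    (p : X -> B) (G : X -> Prop) : B -> Prop :=
  fun b => exists x, G x /\ p x = b.

Definition img {T1 T2} (f : T1 -> T2) (U : T1 -> Prop) : T2 -> Prop :=
  fun y => exists x, U x /\ f x = y.

Definition surjective_on {T1 T2} (S1 : T1 -> Prop) (S2 : T2 -> Prop)
    (f : T1 -> T2) : Prop :=
  forall y, S2 y -> exists x, S1 x /\ f x = y.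

(* f : S1 -> S2 is a local homeomorphism: every point has an open
   neighbourhood U with f(U) open and f|U : U -> f(U) a homeomorphism
   (subspace topologies; since U, f(U) are open, the open subsets of
   the subspaces are the open sets contained in them). *)
Definition local_homeo {T1 T2} (S1 : T1 -> Prop) (O1 : (T1 -> Prop) -> Prop)
    (S2 : T2 -> Prop) (O2 : (T2 -> Prop) -> Prop) (f : T1 -> T2) : Prop :=
  (forall x, S1 x -> S2 (f x)) /\
  forall x, S1 x -> exists U,
    O1 U /\ U x /\ O2 (img f U) /\
    (forall y z, U y -> U z -> f y = f z -> y = z) /\
    (forall W, (forall y, W y -> U y) -> (O1 W <-> O2 (img f W))).

Definition etale {T1 T2} (S1 : T1 -> Prop) (O1 : (T1 -> Prop) -> Prop)
    (S2 : T2 -> Prop) (O2 : (T2 -> Prop) -> Prop) (f : T1 -> T2) : Prop :=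
  surjective_on S1 S2 f /\ local_homeo S1 O1 S2 O2 f.

Definition hausdorff {T} (S : T -> Prop) (O : (T -> Prop) -> Prop) : Prop :=
  forall x y, S x -> S y -> x <> y ->
    exists U V, O U /\ O V /\ U x /\ V y /\ (forall z, U z -> V z -> False).

Definition compact_in {T} (O : (T -> Prop) -> Prop) (K : T -> Prop) : Prop :=
  forall (I : Type) (C : I -> T -> Prop), (forall i, O (C i)) ->
    (forall x, K x -> exists i, C i x) ->
    exists s : list I, forall x, K x -> exists i, List.In i s /\ C i x.

Definition boolean_space {T} (S : T -> Prop) (O : (T -> Prop) -> Prop) : Prop :=
  hausdorff S O /\
  forall U x, O U -> U x ->
    exists V, O V /\ compact_in O V /\ V x /\ (forall y, V y -> U y).

(* Ultrafilters of a generalized Boolean algebra are prime: if they contain c,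
   they contain b or c \ b.  This separates distinct ultrafilters by disjoint
   basic sets, and, with Zorn's lemma producing an ultrafilter containing b that
   avoids the ideal of elements c whose M(c) is finitely covered, it makes every
   M(b) compact.
   In a Boolean set, gluing x with a section of support b \ p(x) extends x to
   any larger support b, so p maps (ultra)filters to (ultra)filters.  An
   ultrafilter F with p(a) in F lifts to the filter generated by the
   restrictions of a to F, and this is the only lift containing a, because
   elements below a are determined by their supports.  Hence p~ is a bijection
   from L(a) onto M(p(a)) exchanging L(c) and M(p(c)) below a. *)

From Pilot Require Import Defs.
From mathcomp Require Import all_boot all_order.
From mathcomp Require Import boolp classical_sets.
From Stdlib Require Import Classical.
Set Implicit Arguments. Unset Strict Implicit. Unset Printing Implicit Defensive.
Import Order.Theory.
Local Open Scope classical_set_scope.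
Local Open Scope order_scope.

Section Filters.
Variables (T : Type) (le : T -> T -> Prop).
Implicit Types (F G : set T) (x y z : T).

Lemma filter_upward F x y : Defs.filter le F -> F x -> le x y -> F y.
Proof. by move=> [_ [_ up]]; apply: up. Qed.

Lemma filter_directed F x y : Defs.filter le F -> F x -> F y ->
  exists z, F z /\ le z x /\ le z y.
Proof. by move=> [_ [dir _]]; apply: dir. Qed.

Lemma ultra_open_basic a : ultra_open le (basic_ultra le a).
Proof. by move=> G [UG Ga]; split=> //; exists a. Qed.

Lemma filter_least_full F z : Defs.filter le F -> is_least le z -> F z ->
  forall x, F x.
Proof. by move=> Ff zl Fz x; apply: filter_upward Ff Fz (zl x). Qed.

Lemma proper_filter_least F z : proper_filter le F -> is_least le z -> ~ F z.
Proof.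
by move=> [Ff [x nFx]] zl Fz; apply: nFx; exact: filter_least_full Ff zl Fz x.
Qed.

Lemma superfilter_ultrafilter F G : ultrafilter le F -> Defs.filter le G ->
  F `<=` G -> G `<=` F \/ forall x, G x.
Proof.
move=> [_ Fmax] Gf FG; have [[x Gx]|Gfull] := classic (exists x, ~ G x).
  by left; apply: Fmax => //; split=> //; exists x.
by right=> x; apply: NNPP => Gx; apply: Gfull; exists x.
Qed.

Lemma ultrafilter_sub_eq F G : ultrafilter le F -> ultrafilter le G ->
  F `<=` G -> F = G.
Proof.
move=> [_ Fmax] [Gp _] FG; rewrite eqEsubset; split=> // x; exact: Fmax.
Qed.

End Filters.

Definition up_image S T (le : T -> T -> Prop) (h : S -> T) (A : set S) :
  set T := [set t | exists2 s, A s & le (h s) t].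

Lemma filter_up_image S T (leS : S -> S -> Prop) (le : T -> T -> Prop)
    (h : S -> T) (A : set S) :
  (forall x, le x x) -> (forall x y z, le x y -> le y z -> le x z) ->
  (forall s s', leS s s' -> le (h s) (h s')) -> Defs.filter leS A ->
  Defs.filter le (up_image le h A).
Proof.
move=> refl trans hmono Af; have [[s0 As0] _] := Af.
split; first by exists (h s0), s0.
split=> [x y [s1 As1 h1] [s2 As2 h2]|x y [s As' hs] xy]; last first.
  by exists s => //; apply: trans xy.
have [s3 [As3 [s31 s32]]] := filter_directed Af As1 As2.
exists (h s3); split; first by exists s3.
by split; [apply: trans (hmono _ _ s31) h1|apply: trans (hmono _ _ s32) h2].
Qed.

Section BooleanUltrafilters.
Variables (d : Order.disp_t) (B : cbDistrLatticeType d).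
Implicit Types (F G : set B) (a b c x y : B).
Local Notation leb := (@leB d B).

Lemma filter_meet F x y : Defs.filter leb F -> F x -> F y -> F (x `&` y).
Proof.
move=> Ff Fx Fy; have [z [Fz [zx zy]]] := filter_directed Ff Fx Fy.
by apply: filter_upward Ff Fz _; rewrite /leB lexI zx zy.
Qed.

Lemma proper_filter_bot F : proper_filter leb F -> ~ F \bot.
Proof. by move=> Fp; apply: proper_filter_least Fp (@le0x _ _). Qed.

Lemma filter_up_image_leB (h : B -> B) F :
  {homo h : x y / x <= y} -> Defs.filter leb F ->
  Defs.filter leb (up_image leb h F).
Proof. by apply: filter_up_image => // x y z; apply: le_trans. Qed.

Lemma ultrafilter_diff F b c : ultrafilter leb F -> F c -> F b \/ F (c `\` b).
Proof.
move=> Fu Fc; have Ff := Fu.1.1.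
have Dfilter := filter_up_image_leB (fun x y => @leBl _ _ b x y) Ff.
have FD : F `<=` up_image leb (fun x => x `\` b) F.
  by move=> x Fx; exists x => //; exact: leBx.
have [DF|Dfull] := superfilter_ultrafilter Fu Dfilter FD.
  by right; apply: DF; exists c => //; exact: le_refl.
have [f Ff' fb] := Dfull \bot; left; apply: filter_upward Ff Ff' _.
by rewrite /leB -diff_eq0 -lex0.
Qed.

Lemma ultrafilter_join F x y : ultrafilter leb F -> F (x `|` y) -> F x \/ F y.
Proof.
move=> Fu Fxy; have [Fx|Fyx] := ultrafilter_diff x Fu Fxy; [by left|right].
by apply: filter_upward Fu.1.1 Fyx _; rewrite /leB leBLR.
Qed.

Lemma ultrafilter_separating F G : ultrafilter leb F -> ultrafilter leb G ->
  F <> G -> exists2 b, F b & ~ G b.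
Proof.
move=> Fu Gu FG; apply: NNPP => nsep; apply: FG.
apply: (ultrafilter_sub_eq Fu Gu) => b Fb.
by apply: NNPP => Gb; apply: nsep; exists b.
Qed.

Lemma hausdorff_ultrafilters : hausdorff (ultrafilter leb) (ultra_open leb).
Proof.
move=> F G Fu Gu FG; have [b Fb Gb] := ultrafilter_separating Fu Gu FG.
have [[[[c Gc] _] _] _] := Gu.
have [//|Gcb] := ultrafilter_diff b Gu Gc.
exists (basic_ultra leb b), (basic_ultra leb (c `\` b)).
do 2!(split; first exact: ultra_open_basic).
do 2!(split; first by split).
move=> H [Hu Hb] [_ Hcb]; apply: (proper_filter_bot Hu.1).
rewrite -(diffIK c b); exact: filter_meet Hu.1.1 Hcb Hb.
Qed.

Section AvoidingUltrafilter.
Variables (I : set B) (b : B).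
Hypotheses (I0 : I \bot) (I_down : forall x y, x <= y -> I y -> I x)
  (I_join : forall x y, I x -> I y -> I (x `|` y)) (nIb : ~ I b).

(* Zorn's lemma needs the empty set in the family, hence the guard on [Q b]. *)
Let avoiding (Q : set B) :=
  ((exists x, Q x) -> Defs.filter leb Q /\ Q b) /\ forall x, Q x -> ~ I x.

Let avoiding_bigcup (Fam : set (set B)) : Fam `<=` avoiding ->
  total_on Fam subset -> avoiding (\bigcup_(Q in Fam) Q).
Proof.
move=> Favoid Ftot; split=> [[x [Q0 FQ0 Q0x]]|x [Q FQ Qx]]; last first.
  exact: (Favoid Q FQ).2.
have member_filter Q y : Fam Q -> Q y -> Defs.filter leb Q.
  by move=> FQ Qy; apply: ((Favoid Q FQ).1 _).1; exists y.
split; last by exists Q0 => //; apply: ((Favoid Q0 FQ0).1 _).2; exists x.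
split; first by exists x, Q0.
split=> [y1 y2 [Q1 FQ1 Q1y] [Q2 FQ2 Q2y]|y z [Q FQ Qy] yz]; last first.
  by exists Q => //; apply: filter_upward (member_filter _ _ FQ Qy) Qy yz.
wlog Q12 : y1 y2 Q1 Q2 FQ1 FQ2 Q1y Q2y / Q1 `<=` Q2.
  move=> wlog; have [Q12|Q21] := Ftot _ _ FQ1 FQ2; first exact: wlog Q12.
  by have [z [Qz [z2 z1]]] := wlog y2 y1 _ _ FQ2 FQ1 Q2y Q1y Q21; exists z.
have Q2f := member_filter _ _ FQ2 Q2y.
have [z [Q2z zy]] := filter_directed Q2f (Q12 _ Q1y) Q2y.
by exists z; split=> //; exists Q2.
Qed.

Let maximal_avoiding : exists A, [/\ Defs.filter leb A, A b,
  forall x, A x -> ~ I x &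
  forall Q, Defs.filter leb Q -> Q b -> (forall x, Q x -> ~ I x) ->
    A `<=` Q -> Q `<=` A].
Proof.
have [A [[Afilter Aavoid] Amax]] := Zorn_bigcup avoiding_bigcup.
have {}Amax Q : avoiding Q -> A `<=` Q -> Q `<=` A.
  move=> Qavoid AQ x Qx; apply: NNPP => nAx.
  by apply: (Amax Q) => //; split=> // QA; apply: nAx; exact: QA.
have Ab : A b.
  have up_b : avoiding (fun y => b <= y).
    split=> [_|x bx Ix]; last exact: nIb (I_down bx Ix).
    split=> //; split; first by exists b.
    split=> [x y bx b_y|x y bx xy]; first by exists b.
    exact: le_trans xy.
  apply: NNPP => nAb; apply: (nAb); apply: (Amax _ up_b) => [x Ax|]; last first.
    exact: le_refl.
  by case: nAb; have [_ Ab] := Afilter (ex_intro _ x Ax).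
exists A; split=> //; first exact: (Afilter (ex_intro _ b Ab)).1.
by move=> Q Qf Qb QI; apply: Amax; split.
Qed.

Lemma ultrafilter_avoiding :
  exists2 F, ultrafilter leb F & F b /\ forall c, F c -> ~ I c.
Proof.
have [A [Af Ab Aavoid Amax]] := maximal_avoiding.
have up_image_sub (h : B -> B) : {homo h : x y / x <= y} ->
    (forall x, h x <= x) -> ~ (exists2 f, A f & I (h f)) ->
    up_image leb h A `<=` A.
  move=> hmono hdefl nI; apply: Amax => [||c [f Af' hfc] Ic|f Af'].
  - exact: filter_up_image_leB.
  - by exists b => //; exact: hdefl.
  - by apply: nI; exists f => //; exact: I_down Ic.
  - by exists f => //; exact: hdefl.
exists A; last by split.
split.
  by split=> //; exists \bot => Abot; exact: Aavoid Abot I0.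
move=> F' F'p AF' y F'y; have F'f := F'p.1.
have [[f1 Af1 If1]|nI1] := classic (exists2 f, A f & I (f `&` y)); last first.
  apply: (up_image_sub _ _ _ nI1); first by move=> x z xz; exact: leI2.
    by move=> x; exact: leIl.
  by exists b => //; exact: leIr.
have [[f2 Af2 If2]|nI2] := classic (exists2 f, A f & I (f `\` y)); last first.
  have Aby : A (b `\` y).
    apply: (up_image_sub _ _ _ nI2) => [x z xz|x|]; [exact: leBl|exact: leBx|].
    by exists b => //; exact: le_refl.
  exfalso; apply: (proper_filter_bot F'p); rewrite -(diffIK b y).
  exact: filter_meet F'f (AF' _ Aby) F'y.
have [f [Af' [f1f f2f]]] := filter_directed Af Af1 Af2.
exfalso; apply: (Aavoid f Af'); rewrite -(joinIB y f).
apply: I_join; first exact: I_down (leI2 f1f (le_refl y)) If1.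
exact: I_down (leBl y f2f) If2.
Qed.

End AvoidingUltrafilter.

Lemma compact_basic_ultra b : compact_in (ultra_open leb) (basic_ultra leb b).
Proof.
move=> Idx C Copen Ccover.
pose covered c := exists s : list Idx,
  forall F, basic_ultra leb c F -> exists i, List.In i s /\ C i F.
apply: NNPP => nIb.
have [||||F Fu [Fb Fnc]] := @ultrafilter_avoiding covered b.
- by exists nil => F [Fu Fbot]; case: (proper_filter_bot Fu.1 Fbot).
- move=> x y xy [s cov]; exists s => F [Fu Fx]; apply: cov; split=> //.
  exact: filter_upward Fu.1.1 Fx xy.
- move=> x y [s1 cov1] [s2 cov2]; exists (s1 ++ s2) => F [Fu Fxy].
  have [Fx|Fy] := ultrafilter_join Fu Fxy.
    have [i [si Ci]] := cov1 F (conj Fu Fx).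
    by exists i; rewrite List.in_app_iff; auto.
  have [i [si Ci]] := cov2 F (conj Fu Fy).
  by exists i; rewrite List.in_app_iff; auto.
- exact: nIb.
have [i CiF] := Ccover F (conj Fu Fb).
have [_ [a [Fa Ca]]] := Copen i F CiF.
by apply: (Fnc a Fa); exists [:: i] => G Ga; exists i; split; [left|exact: Ca].
Qed.

Lemma boolean_space_ultrafilters :
  boolean_space (ultrafilter leb) (ultra_open leb).
Proof.
split; first exact: hausdorff_ultrafilters.
move=> U F Uopen UF; have [Fu [a [Fa aU]]] := Uopen F UF.
exists (basic_ultra leb a); split; first exact: ultra_open_basic.
by split; [exact: compact_basic_ultra|split].
Qed.

End BooleanUltrafilters.

Section BooleanSet.
Variables (d : Order.disp_t) (B : cbDistrLatticeType d) (X : Type).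
Variables (p : X -> B) (res : X -> B -> X).
Hypothesis pres : boolean_set p res.
Local Notation leb := (@leB d B).
Local Notation le := (leX p res).
Implicit Types (x y z a : X) (G H : set X) (F : set B) (b f g : B).

Lemma p_res x f : f <= p x -> p (res x f) = f.
Proof. exact: pres.1.1. Qed.

Lemma res_p x : res x (p x) = x.
Proof. exact: pres.1.2.1. Qed.

Lemma res_res x f g : g <= f -> f <= p x -> res (res x f) g = res x g.
Proof. exact: pres.1.2.2. Qed.

Lemma p_bot_least x : p x = \bot -> is_least le x.
Proof. exact: pres.2.2.2.2. Qed.

Lemma leX_refl x : le x x.
Proof. by split; rewrite ?res_p. Qed.

Lemma leX_trans x y z : le x y -> le y z -> le x z.
Proof.
move=> [pxy ex] [pyz ey]; split; first exact: le_trans pyz.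
by rewrite {1}ex {1}ey res_res.
Qed.

Lemma leX_p x y : le x y -> p x <= p y.
Proof. by case. Qed.

Lemma leX_res x f : f <= p x -> le (res x f) x.
Proof. by move=> fx; split; rewrite p_res. Qed.

Lemma res_leX x y f g : le x y -> f <= p x -> f <= g -> g <= p y ->
  le (res x f) (res y g).
Proof.
move=> [pxy ex] fx fg gy; split; first by rewrite !p_res.
by rewrite p_res // {1}ex !res_res // (le_trans fg).
Qed.

Lemma leX_below a x y : le x a -> le y a -> p x <= p y -> le x y.
Proof.
move=> [xa ex] [ya ey] pxy; rewrite ex ey.
by apply: res_leX => //; exact: leX_refl.
Qed.

Lemma leX_zero : exists2 z, is_least le z & p z = \bot.
Proof. by have [z pz] := pres.2.1 \bot; exists z => //; exact: p_bot_least. Qed.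

Lemma leX_p_bot x z : le x z -> p z = \bot -> p x = \bot.
Proof. by move=> /leX_p xz pz; apply/eqP; rewrite -lex0 -pz. Qed.

Lemma compatible_disjoint x y : p x `&` p y = \bot -> compatible p res x y.
Proof.
move=> dxy; have [z zl pz] := leX_zero; exists z; split; last by rewrite pz dxy.
do 2!split=> //; move=> w wx wy; apply: p_bot_least; apply/eqP.
by rewrite -lex0 -dxy lexI (leX_p wx) (leX_p wy).
Qed.

(* The witness is the join of [x] with any element of support [b \ p x]. *)
Lemma leX_extend x b : p x <= b -> exists2 j, le x j & p j = b.
Proof.
move=> xb; have [y py] := pres.2.1 (b `\` p x).
have dxy : p x `&` p y = \bot by rewrite py meetC diffIK.
have [j [xj [yj jmin]]] := pres.2.2.2.1 x y (compatible_disjoint dxy).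
have bj : b <= p j.
  rewrite -(joinIB (p x) b) leUx -py (leX_p yj) andbT.
  exact: le_trans (leIr _ _) (leX_p xj).
have below_res z : le z j -> p z <= b -> le z (res j b).
  by move=> zj zb; rewrite -(res_p z); exact: res_leX zj (le_refl _) zb bj.
have yb : p y <= b by rewrite py leBx.
have := leX_p (jmin _ (below_res _ xj xb) (below_res _ yj yb)).
by rewrite p_res // => jb; exists j => //; apply/eqP; rewrite eq_le jb bj.
Qed.

Lemma filter_ptilde G : Defs.filter le G -> Defs.filter leb (ptilde p G).
Proof.
move=> Gf; have [[x0 Gx0] _] := Gf; split; first by exists (p x0), x0.
split=> [_ _ [x [Gx <-]] [y [Gy <-]]|_ b [x [Gx <-]] xb].
  have [z [Gz [zx zy]]] := filter_directed Gf Gx Gy.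
  by exists (p z); split; [exists z|split; exact: leX_p].
have [j xj pj] := leX_extend xb.
by exists j; split=> //; exact: filter_upward Gf Gx xj.
Qed.

Lemma proper_filter_ptilde G :
  proper_filter le G -> proper_filter leb (ptilde p G).
Proof.
move=> Gp; split; first exact: filter_ptilde Gp.1.
exists \bot => -[x [Gx px]].
exact: proper_filter_least Gp (p_bot_least px) Gx.
Qed.

Lemma ultrafilter_ptilde G : ultrafilter le G -> ultrafilter leb (ptilde p G).
Proof.
move=> Gu; split; first exact: proper_filter_ptilde Gu.1.
move=> F' F'p GF' b F'b; have Gf := Gu.1.1.
(* Restricting the members of [G] to [b] either stays inside [G], putting
   [b] in [ptilde p G], or reaches support [\bot], which [F'] forbids. *)
pose cut x := res x (p x `&` b).
have cut_mono x y : le x y -> le (cut x) (cut y).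
  by move=> xy; apply: res_leX; rewrite ?leIl ?leI2 ?(leX_p xy).
have Cf : Defs.filter le (up_image le cut G).
  by apply: filter_up_image cut_mono Gf; [exact: leX_refl|exact: leX_trans].
have GC : G `<=` up_image le cut G.
  by move=> x Gx; exists x => //; exact/leX_res/leIl.
have [CG|Cfull] := superfilter_ultrafilter Gu Cf GC.
  have [[x Gx] _] := Gf.
  have Gcx := CG _ (ex_intro2 _ _ x Gx (leX_refl (cut x))).
  apply: filter_upward (filter_ptilde Gf) _ (leIr b (p x)).
  by exists (cut x); rewrite p_res ?leIl.
have [z zl pz] := leX_zero; have [x Gx xz] := Cfull z.
have := leX_p_bot xz pz; rewrite p_res ?leIl // => pxb.
case: (proper_filter_bot F'p); rewrite -pxb.
by apply: filter_meet F'p.1 _ F'b; apply: GF'; exists x.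
Qed.

Lemma ultrafilter_lift F a : ultrafilter leb F -> F (p a) ->
  exists2 G, basic_ultra le a G & ptilde p G = F.
Proof.
move=> Fu Fa; have Ff := Fu.1.1.
pose lift f := res a (f `&` p a).
have lift_mono f g : f <= g -> le (lift f) (lift g).
  by move=> fg; apply: res_leX; rewrite ?leIr ?leI2 //; exact: leX_refl.
pose G := up_image le lift F.
have Gf : Defs.filter le G.
  by apply: filter_up_image lift_mono Ff; [exact: leX_refl|exact: leX_trans].
have Ga : G a.
  by exists (p a) => //; rewrite /lift meetxx res_p; exact: leX_refl.
have F_ptilde G' : Defs.filter le G' -> G `<=` G' -> F `<=` ptilde p G'.
  move=> G'f GG' f Ff'.
  apply: filter_upward (filter_ptilde G'f) _ (leIl f (p a)).
  exists (lift f); split; last by rewrite p_res ?leIr.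
  by apply: GG'; exists f => //; exact: leX_refl.
have Gp : proper_filter le G.
  split=> //; have [z zl pz] := leX_zero; exists z => -[f Ff' fz].
  have := leX_p_bot fz pz; rewrite p_res ?leIr // => fa.
  by apply: (proper_filter_bot Fu.1); rewrite -fa; exact: filter_meet.
have Gu : ultrafilter le G.
  split=> // G' G'p GG' y G'y.
  have [w [G'w [wa wy]]] := filter_directed G'p.1 (GG' _ Ga) G'y.
  have Fw : F (p w).
    apply: Fu.2 (proper_filter_ptilde G'p) (F_ptilde _ G'p.1 GG') _ _.
    by exists w.
  exists (p w) => //; rewrite /lift meet_l; first by rewrite -wa.2.
  exact: leX_p wa.
exists G => //; apply/esym/(ultrafilter_sub_eq Fu (ultrafilter_ptilde Gu)).
exact: F_ptilde.
Qed.

Lemma ptilde_sub_basic a G H : Defs.filter le G -> Defs.filter le H ->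
  G a -> H a -> ptilde p G `<=` ptilde p H -> G `<=` H.
Proof.
move=> Gf Hf Ga Ha GH y Gy.
have [w [Gw [wa wy]]] := filter_directed Gf Ga Gy.
have [v [Hv pv]] := GH (p w) (ex_intro _ w (conj Gw erefl)).
have [u [Hu [uv ua]]] := filter_directed Hf Hv Ha.
apply: filter_upward Hf Hu (leX_trans _ wy).
by apply: (leX_below ua wa); rewrite -pv; exact: leX_p.
Qed.

Lemma ptilde_inj_basic a G H : basic_ultra le a G -> basic_ultra le a H ->
  ptilde p G = ptilde p H -> G = H.
Proof.
move=> [Gu Ga] [Hu Ha] e; apply: (ultrafilter_sub_eq Gu Hu).
by apply: (ptilde_sub_basic Gu.1.1 Hu.1.1 Ga Ha); rewrite e.
Qed.

Lemma img_ptilde_basic a F :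
  img (ptilde p) (basic_ultra le a) F <-> basic_ultra leb (p a) F.
Proof.
split=> [[G [[Gu Ga] <-]]|[Fu Fa]].
  by split; [exact: ultrafilter_ptilde|exists a].
by have [G Ga <-] := ultrafilter_lift Fu Fa; exists G.
Qed.

Lemma ptilde_open W : ultra_open le W -> ultra_open leb (img (ptilde p) W).
Proof.
move=> Wo _ [G [WG <-]]; have [Gu [c [Gc cW]]] := Wo G WG.
split; first exact: ultrafilter_ptilde.
exists (p c); split; first by exists c.
by move=> F /img_ptilde_basic[H [Hc <-]]; exists H; split=> //; exact: cW.
Qed.

Lemma ptilde_open_reflect a W : W `<=` basic_ultra le a ->
  ultra_open leb (img (ptilde p) W) -> ultra_open le W.
Proof.
move=> Wa Wo H WH; have [Hu Ha] := Wa H WH; split=> //.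
have [_ [_ [[c [Hc <-]] cW]]] := Wo _ (ex_intro _ H (conj WH erefl)).
have [c' [Hc' [c'c c'a]]] := filter_directed Hu.1.1 Hc Ha.
exists c'; split=> // H' [H'u H'c'].
have H'a := filter_upward H'u.1.1 H'c' c'a.
have H'c := filter_upward H'u.1.1 H'c' c'c.
have [|H'' [WH'' e]] := cW (ptilde p H').
  by split; [exact: ultrafilter_ptilde|exists c].
by rewrite -(ptilde_inj_basic (Wa _ WH'') (conj H'u H'a) e).
Qed.

Lemma etale_ptilde : etale (ultrafilter le) (ultra_open le)
  (ultrafilter leb) (ultra_open leb) (ptilde p).
Proof.
split=> [F Fu|].
  have [[[f Ff] _] _] := Fu.1; have [a pa] := pres.2.1 f.
  rewrite -pa in Ff; have [G [Gu _] <-] := ultrafilter_lift Fu Ff.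
  by exists G.
split=> [G Gu|G Gu]; first exact: ultrafilter_ptilde.
have [[[a Ga] _] _] := Gu.1.
exists (basic_ultra le a); split; first exact: ultra_open_basic.
split; first by split.
split; first exact/ptilde_open/ultra_open_basic.
split; first by move=> G1 G2 G1a G2a; exact: ptilde_inj_basic G1a G2a.
by move=> W Wa; split; [exact: ptilde_open|exact: ptilde_open_reflect Wa].
Qed.

End BooleanSet.

Theorem proposition3p9 (d : Order.disp_t) (B : cbDistrLatticeType d)
    (X : Type) (p : X -> B) (res : X -> B -> X) :
  boolean_set p res ->
  (forall G, ultrafilter (leX p res) G -> ultrafilter (@leB d B) (ptilde p G)) /\
  etale (ultrafilter (leX p res)) (ultra_open (leX p res))
        (ultrafilter (@leB d B)) (ultra_open (@leB d B)) (ptilde p) /\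
  boolean_space (ultrafilter (@leB d B)) (ultra_open (@leB d B)).
Proof.
move=> pres; split=> [G|]; first exact: (ultrafilter_ptilde pres).
by split; [exact: etale_ptilde|exact: boolean_space_ultrafilters].
Qed.
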